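(* Let $G=(V,E)$ be a finite simple connected graph, and let $T(G)$ be the largest $t$ such that $G$ contains a $t$-tuplet. Then $IDI(G)\ge T(G)$.
   Context: For a graph $G=(V,E)$, a set $S\subseteq V$ with $|S|=t\ge 2$ is a $t$-tuplet if either $S$ is an independent set and any two vertices of $S$ have the same (open) neighborhood, or $S$ is a clique and any two vertices of $S$ have the same closed neighborhood $N(v)\cup\{v\}$. For $G$ with diameter $d$, a rank assignment is a function $f:V\to\mathbb{R}$; under $f$, the string of a vertex $v$ is the $d$-vector whose $i$-th coordinate is the sum of $f(w)$ over all vertices $w$ with $d(v,w)=i$. The ID-index $IDI(G)$ is the minimum $k$ such that there exists $f:V\to\mathbb{R}$ with $|f(V)|=k$ under which all vertices have distinct strings. *)

From HB Require Import structures.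
From mathcomp Require Import all_boot all_order all_algebra.
From mathcomp Require Import reals.
Set Implicit Arguments. Unset Strict Implicit. Unset Printing Implicit Defensive.
Import Order.TTheory GRing.Theory Num.Theory.

Section Graphs.
Variable V : finType.
Variable e : rel V.

Definition simple_graph := symmetric e /\ irreflexive e.
Definition connected_graph := forall u v : V, connect e u v.

Fixpoint walkn (n : nat) (u v : V) : bool :=
  match n with
  | 0 => u == v
  | n'.+1 => [exists w, e u w && walkn n' w v]
  end.

(* graph distance: least n with a walk of length n (shortest walks have
   fewer than #|V| edges in a connected graph; default #|V| otherwise) *)
Definition dist (u v : V) : nat :=
  \big[minn/#|V|]_(n < #|V| | walkn n u v) (n : nat).

Definition diameter : nat := \max_(u : V) \max_(v : V) dist u v.

(* string of v under f: coordinate i (0-indexed, standing for distance i+1)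
   is the sum of f w over vertices w at distance i+1 from v *)
Definition vstring (R : realType) (f : V -> R) (v : V) : 'rV[R]_diameter :=
  \row_(i < diameter) (\sum_(w : V | dist v w == i.+1) f w)%R.

Definition num_ranks (R : realType) (f : V -> R) : nat :=
  size (undup [seq f x | x <- enum V]).

Definition is_IDI (R : realType) (k : nat) : Prop :=
  (exists f : V -> R, injective (vstring f) /\ num_ranks f = k) /\
  (forall f : V -> R, injective (vstring f) -> k <= num_ranks f).

Definition tuplet (S : {set V}) : bool :=
  (2 <= #|S|) &&
  ( ([forall x in S, forall y in S, ~~ e x y] &&
     [forall x in S, forall y in S, forall z, e x z == e y z])
  || ([forall x in S, forall y in S, (x != y) ==> e x y] &&
      [forall x in S, forall y in S, forall z,
          (e x z || (z == x)) == (e y z || (z == y))]) ).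

(* T(G): largest size of a tuplet (0 if there is none) *)
Definition T_index : nat := \max_(S : {set V} | tuplet S) #|S|.

End Graphs.

From HB Require Import structures.
From mathcomp Require Import all_boot all_order fingroup perm all_algebra.
From mathcomp Require Import reals.
Set Implicit Arguments. Unset Strict Implicit. Unset Printing Implicit Defensive.

(* Two vertices of a tuplet are twins: they have the same open or the same
   closed neighbourhood, so every other vertex is at the same distance from
   both.  Hence the transposition of two twins preserves distances, and a rank
   assignment taking the same value on them gives them the same string.  A
   separating assignment is therefore injective on every tuplet, and uses at
   least T(G) values. *)

(* [bigD1] only needs an associative and commutative operation. *)
#[local] HB.instance Definition _ := SemiGroup.isComLaw.Build nat minn minnA minnC.

Section Distance.
Variables (V : finType) (e : rel V).

Lemma walknS n u v : walkn e n.+1 u v = [exists w, e u w && walkn e n w v].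
Proof. by []. Qed.

Lemma walknSr n u v : walkn e n.+1 u v = [exists w, walkn e n u w && e w v].
Proof.
elim: n u => [|n IHn] u.
  apply/existsP/existsP => [[w /andP[euw /eqP <-]]|[w /andP[/eqP <- ewv]]].
    by exists u; rewrite /= eqxx.
  by exists v; rewrite ewv eqxx.
rewrite walknS; apply/existsP/existsP.
  move=> [w /andP[euw]]; rewrite IHn => /existsP[w' /andP[ww' ew'v]].
  by exists w'; rewrite ew'v andbT; apply/existsP; exists w; rewrite euw.
move=> [w' /andP[/existsP[w /andP[euw uw']] ew'v]].
by exists w; rewrite euw IHn; apply/existsP; exists w'; rewrite ew'v andbT.
Qed.

Lemma walkn_sym n u v : symmetric e -> walkn e n u v = walkn e n v u.
Proof.
move=> e_sym; elim: n u v => [|n IHn] u v; first by rewrite /= eq_sym.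
rewrite walknS walknSr; apply/existsP/existsP => -[w /andP[uw wv]].
  by exists w; rewrite IHn wv e_sym uw.
by exists w; rewrite e_sym wv IHn uw.
Qed.

Lemma dist_sym u v : symmetric e -> dist e u v = dist e v u.
Proof. by move=> e_sym; apply: eq_bigl => n; apply: walkn_sym. Qed.

Lemma dist_le_card u v : dist e u v <= #|V|.
Proof.
apply: (big_ind (fun n => n <= #|V|)) => // [m n mV _|i _]; last exact: ltnW.
by rewrite geq_min mV.
Qed.

Lemma dist_le_walkn u v m : m < #|V| -> walkn e m u v -> dist e u v <= m.
Proof. by move=> mV uv; rewrite /dist (bigD1 (Ordinal mV)) //= geq_minl. Qed.

Lemma dist_walkn u v : dist e u v < #|V| -> walkn e (dist e u v) u v.
Proof.
apply: (big_ind (fun n => n < #|V| -> walkn e n u v)) => [|m n IHm IHn|//].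
  by rewrite ltnn.
by rewrite /minn; case: ifP => _; [exact: IHm | exact: IHn].
Qed.

Lemma dist_self u : dist e u u = 0.
Proof.
by apply/eqP; rewrite -leqn0 dist_le_walkn //=; apply/card_gt0P; exists u.
Qed.

End Distance.

Section Twins.
Variables (V : finType) (e : rel V).

Definition twins (x y : V) :=
  (forall z, e x z = e y z) \/
  (forall z, (e x z || (z == x)) = (e y z || (z == y))).

Lemma twins_sym x y : twins x y -> twins y x.
Proof. by case=> h; [left|right] => z; rewrite h. Qed.

Lemma tuplet_twins (S : {set V}) x y :
  tuplet e S -> x \in S -> y \in S -> twins x y.
Proof.
case/andP=> _ /orP[/andP[_ /forallP open]|/andP[_ /forallP closed]] xS yS.
  by left=> z; move: (open x); rewrite xS => /forall_inP/(_ y yS)/forallP/(_ z)/eqP.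
by right=> z; move: (closed x); rewrite xS => /forall_inP/(_ y yS)/forallP/(_ z)/eqP.
Qed.

(* A walk leaving y through a neighbour z can leave x through z instead, or,
   if z = x (closed twins), simply start at x one step later. *)
Lemma twins_walkn x y w n : twins x y -> w != y -> walkn e n y w ->
  exists2 m, m <= n & walkn e m x w.
Proof.
case: n => [_ wy /eqP yw | n tw _ /existsP[z /andP[eyz zw]]].
  by rewrite yw eqxx in wy.
have [exz | <-] : e x z \/ z = x.
  case: tw => nbhd; first by left; rewrite nbhd.
  by move: (nbhd z); rewrite eyz /= => /orP[|/eqP]; [left|right].
- by exists n.+1 => //; apply/existsP; exists z; rewrite exz.
- by exists n.
Qed.

Lemma twins_dist_le x y w : twins x y -> w != y -> dist e x w <= dist e y w.
Proof.
move=> tw wy; have [dyw|] := ltnP (dist e y w) #|V|; last first.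
  exact: leq_trans (dist_le_card e x w).
have [m mle xw] := twins_walkn tw wy (dist_walkn dyw).
exact: leq_trans (dist_le_walkn (leq_ltn_trans mle dyw) xw) mle.
Qed.

Lemma twins_dist x y w : twins x y -> w != x -> w != y ->
  dist e x w = dist e y w.
Proof.
move=> tw wx wy; apply/eqP; rewrite eqn_leq twins_dist_le //.
exact: twins_dist_le (twins_sym tw) wx.
Qed.

Lemma twins_dist_tperm x y w : symmetric e -> twins x y ->
  dist e x (tperm x y w) = dist e y w.
Proof.
move=> e_sym tw; case: tpermP => [->|->|wx wy]; rewrite ?dist_self.
- by rewrite dist_sym.
- by [].
- by rewrite (twins_dist tw); apply/eqP.
Qed.

Lemma vstring_twins (R : realType) (f : V -> R) x y :
  symmetric e -> twins x y -> f x = f y -> vstring e f x = vstring e f y.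
Proof.
move=> e_sym tw fxy; apply/rowP => i; rewrite !mxE.
rewrite (reindex_inj (@perm_inj _ (tperm x y))); apply: eq_big => [w|w _].
  by rewrite twins_dist_tperm.
by case: tpermP => [->|->|].
Qed.

End Twins.

Lemma vstring_inj_in_tuplet (R : realType) (V : finType) (e : rel V)
    (f : V -> R) (S : {set V}) :
  symmetric e -> injective (vstring e f) -> tuplet e S -> {in S &, injective f}.
Proof.
move=> e_sym f_sep tS x y xS yS fxy.
exact/f_sep/vstring_twins/fxy/(tuplet_twins tS xS yS).
Qed.

Lemma card_le_num_ranks (R : realType) (V : finType) (f : V -> R) (S : {set V}) :
  {in S &, injective f} -> #|S| <= num_ranks f.
Proof.
move=> f_inj; rewrite /num_ranks cardE -(size_map f).
apply: uniq_leq_size => [|_ /mapP[x _ ->]].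
  by rewrite map_inj_in_uniq ?enum_uniq // => a b; rewrite !mem_enum; apply: f_inj.
by rewrite mem_undup map_f ?mem_enum.
Qed.

Theorem mainTheorem3 (R : realType) (V : finType) (e : rel V) :
  simple_graph e -> connected_graph e ->
  forall k : nat, is_IDI e R k -> T_index e <= k.
Proof.
move=> [e_sym _] _ k [[f [f_sep <-]] _].
apply/bigmax_leqP => S tS.
exact/card_le_num_ranks/(vstring_inj_in_tuplet e_sym f_sep tS).
Qed.
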